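(* Under the standing assumptions, for $\theta\in(\pi/2,\pi)$ one has $w(\theta)=0$ if and only if $a>1/4$ and $\theta=\cos^{-1}\!\left(-\frac{1}{2\sqrt a}\right)$.
   Context: Standing assumptions: $a,b\in\mathbb{R}$ with $b>0$, $1+a+b>0$, $9-27a+b>0$, $2-8a+8a^2+ab\ne0$, $b+1-a\ne0$. Let $f^*(\zeta,\theta)=(\zeta+2\cos\theta)(2\zeta\cos\theta+1)+b\zeta-a(\zeta+2\cos\theta)^3$. Under these assumptions, for each $\theta\in(\pi/2,\pi)$ the polynomial $f^*(\cdot,\theta)$ has exactly one real zero in $(-1,1)$; denote it $w(\theta)$ (so $w(\theta)=1/\zeta(\theta)$). *)

From Stdlib Require Import Reals Lra ClassicalEpsilon.
Open Scope R_scope.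

Definition fstar (a b zeta theta : R) : R :=
  (zeta + 2 * cos theta) * (2 * zeta * cos theta + 1) + b * zeta
  - a * (zeta + 2 * cos theta) ^ 3.

Definition standing (a b : R) : Prop :=
  b > 0 /\ 1 + a + b > 0 /\ 9 - 27 * a + b > 0 /\
  2 - 8 * a + 8 * a ^ 2 + a * b <> 0 /\ b + 1 - a <> 0.

(* w(theta): the (unique, under the standing assumptions) real zero of
   f^*(., theta) in (-1,1), selected by Hilbert's epsilon. *)
Definition w (a b theta : R) : R :=
  epsilon (inhabits 0) (fun z => -1 < z < 1 /\ fstar a b z theta = 0).

(** On (-1,1) the cubic [fstar a b . t] changes sign, being positive at 1 and
    negative at -1, because [u^2 + b - a u^3 > 0] for -1 < u < 3.  Its value at
    0 is [2 c (1 - 4 a c^2)] with [c = cos t < 0], so [0] is a root exactly when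
    [4 a c^2 = 1], i.e. [c = -1/(2 sqrt a)] with [a > 1/4].  In that case
    [fstar = z q(z)] with [q] concave and positive at both ends of [(-1,1)],
    so [0] is the only root there and [w] must pick it. *)
From Stdlib Require Import Reals Lra Psatz ClassicalEpsilon.
Open Scope R_scope.

Lemma cos_in_second_quadrant (t : R) : PI / 2 < t < PI -> -1 < cos t < 0.
Proof.
  intros Ht. pose proof PI_RGT_0.
  split.
  - rewrite <- cos_PI. apply cos_decreasing_1; lra.
  - rewrite <- cos_PI2. apply cos_decreasing_1; lra.
Qed.

Lemma concave_quadratic_pos (p q r z : R) :
  0 <= p -> -p - q + r > 0 -> -p + q + r > 0 -> -1 < z < 1 ->
  -p * z^2 + q * z + r > 0.
Proof.
  intros Hp Hm Hl Hz.
  (* interpolate linearly between the endpoint values; concavity adds [p (1 - z^2)] *)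
  replace (-p * z^2 + q * z + r)
    with ((1 - z) / 2 * (-p - q + r) + (1 + z) / 2 * (-p + q + r) + p * (1 - z^2))
    by field.
  assert (0 <= p * (1 - z^2)) by (apply Rmult_le_pos; nra).
  assert (0 < (1 - z) / 2 * (-p - q + r)) by (apply Rmult_lt_0_compat; lra).
  assert (0 < (1 + z) / 2 * (-p + q + r)) by (apply Rmult_lt_0_compat; lra).
  lra.
Qed.

Lemma eq_acos_iff (t x : R) :
  0 <= t <= PI -> -1 <= x <= 1 -> (t = acos x <-> cos t = x).
Proof.
  intros Ht Hx. split; intros E.
  - subst t. now apply cos_acos.
  - subst x. symmetry. now apply acos_cos.
Qed.

Lemma inv_two_sqrt_bounds (a : R) : 1 / 4 < a -> 0 < 1 / (2 * sqrt a) < 1.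
Proof.
  intros Ha.
  assert (Hsq : sqrt a * sqrt a = a) by (apply sqrt_sqrt; lra).
  assert (0 < sqrt a) by (apply sqrt_lt_R0; lra).
  assert (Hs : 1 / 2 < sqrt a) by (destruct (Rle_or_lt (sqrt a) (1 / 2)); nra).
  split.
  - apply Rdiv_lt_0_compat; lra.
  - apply (Rmult_lt_reg_r (2 * sqrt a)); [lra|].
    replace (1 / (2 * sqrt a) * (2 * sqrt a)) with 1 by (field; lra). lra.
Qed.

Lemma four_mul_sqr_eq1_iff (a c : R) :
  -1 < c < 0 -> (4 * a * c^2 = 1 <-> 1 / 4 < a /\ c = - (1 / (2 * sqrt a))).
Proof.
  intros Hc. split.
  - intros H4.
    assert (Ha : 1 / 4 < a) by nra.
    assert (Hsq : sqrt a * sqrt a = a) by (apply sqrt_sqrt; lra).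
    assert (Hs : 0 < sqrt a) by (apply sqrt_lt_R0; lra).
    assert (E : 2 * sqrt a * c = -1).
    { assert (0 < sqrt a * - c) by (apply Rmult_lt_0_compat; lra). nra. }
    split; [exact Ha|].
    apply (Rmult_eq_reg_l (2 * sqrt a)); [|lra].
    rewrite E. field. lra.
  - intros [Ha ->].
    assert (Hsq : sqrt a * sqrt a = a) by (apply sqrt_sqrt; lra).
    assert (0 < sqrt a) by (apply sqrt_lt_R0; lra).
    replace (4 * a * (- (1 / (2 * sqrt a)))^2) with (a / (sqrt a * sqrt a))
      by (field; lra).
    rewrite Hsq. field. lra.
Qed.

Lemma fstar_at_zero (a b t : R) :
  fstar a b 0 t = 2 * cos t * (1 - 4 * a * cos t ^ 2).
Proof. unfold fstar. ring. Qed.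

Section FstarOnUnitInterval.

Variables a b : R.
Hypothesis b_pos : b > 0.
Hypothesis one_add_pos : 1 + a + b > 0.
Hypothesis nine_sub_pos : 9 - 27 * a + b > 0.

Lemma sq_add_sub_cube_pos (u : R) : -1 < u < 3 -> u^2 + b - a * u^3 > 0.
Proof.
  intros Hu.
  destruct (Rle_or_lt (a * u) 1) as [Hau|Hau].
  - assert (0 <= u^2 * (1 - a * u)) by (apply Rmult_le_pos; nra).
    nra.
  - destruct (Rle_or_lt u 0) as [Hu0|Hu0].
    + (* here a < 0 and [u^2 (1 - a u) >= 1 - a u >= 1 + a] *)
      assert (a < 0) by nra.
      assert (0 <= (1 - u^2) * (a * u - 1)) by (apply Rmult_le_pos; nra).
      nra.
    + (* here a > 0 and the value is at least its value at [u = 3] *)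
      assert (a > 0) by nra.
      assert (a * (u^2 + 3 * u + 9) >= u + 3) by nra.
      assert (0 <= (3 - u) * (a * (u^2 + 3 * u + 9) - (u + 3)))
        by (apply Rmult_le_pos; nra).
      nra.
Qed.

Variable t : R.
Hypothesis cos_bounds : -1 < cos t < 1.

Lemma fstar_one_pos : fstar a b 1 t > 0.
Proof.
  replace (fstar a b 1 t) with ((1 + 2 * cos t)^2 + b - a * (1 + 2 * cos t)^3)
    by (unfold fstar; ring).
  apply sq_add_sub_cube_pos. lra.
Qed.

Lemma fstar_mone_neg : fstar a b (-1) t < 0.
Proof.
  replace (fstar a b (-1) t) with (- ((1 - 2 * cos t)^2 + b - a * (1 - 2 * cos t)^3))
    by (unfold fstar; ring).
  pose proof (sq_add_sub_cube_pos (1 - 2 * cos t) ltac:(lra)). lra.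
Qed.

Lemma fstar_root_exists : exists z, -1 < z < 1 /\ fstar a b z t = 0.
Proof.
  pose proof fstar_one_pos. pose proof fstar_mone_neg.
  assert (Hcont : continuity (fun z => fstar a b z t)) by (unfold fstar; reg).
  destruct (IVT _ (-1) 1 Hcont ltac:(lra) ltac:(assumption) ltac:(assumption))
    as [z [[Hl Hr] Hz]].
  exists z. split; [|exact Hz].
  split.
  - destruct Hl as [Hl | Hl]; [assumption | subst z; lra].
  - destruct Hr as [Hr | Hr]; [assumption | subst z; lra].
Qed.

Lemma fstar_root_eq0 (z : R) :
  4 * a * cos t ^ 2 = 1 -> -1 < z < 1 -> fstar a b z t = 0 -> z = 0.
Proof.
  intros H4 Hz Hf.
  set (q := fun x => -a * x^2 + 2 * cos t * (1 - 3 * a) * x + (b - 2 + 4 * cos t ^ 2)).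
  assert (Hfactor : forall x, fstar a b x t = x * q x).
  { intros x. unfold fstar, q.
    replace (8 * a * cos t ^ 3) with (2 * cos t * (4 * a * cos t ^ 2)) by ring.
    replace (a * (x + 2 * cos t) ^ 3)
      with (a * x^3 + 6 * a * cos t * x^2 + 3 * (4 * a * cos t ^ 2) * x
            + 2 * cos t * (4 * a * cos t ^ 2)) by ring.
    rewrite H4. ring. }
  assert (Hq : q z > 0).
  { pose proof fstar_one_pos as F1. pose proof fstar_mone_neg as F2.
    rewrite Hfactor in F1, F2. unfold q in F1, F2 |- *.
    apply concave_quadratic_pos; [nra | nra | nra | exact Hz]. }
  rewrite Hfactor in Hf.
  destruct (Rmult_integral _ _ Hf); [assumption | lra].
Qed.

End FstarOnUnitInterval.

Lemma w_spec (a b t : R) :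
  standing a b -> PI / 2 < t < PI -> -1 < w a b t < 1 /\ fstar a b (w a b t) t = 0.
Proof.
  intros [Hb [H1 [H9 _]]] Ht.
  pose proof (cos_in_second_quadrant t Ht).
  apply (epsilon_spec (inhabits 0) (fun z => -1 < z < 1 /\ fstar a b z t = 0)).
  apply fstar_root_exists; lra.
Qed.

Lemma w_eq0_iff (a b t : R) :
  standing a b -> PI / 2 < t < PI -> (w a b t = 0 <-> 4 * a * cos t ^ 2 = 1).
Proof.
  intros Hs Ht.
  pose proof (cos_in_second_quadrant t Ht) as Hc.
  destruct (w_spec a b t Hs Ht) as [Hw Hf].
  destruct Hs as [Hb [H1 [H9 _]]].
  split.
  - intros E. rewrite E, fstar_at_zero in Hf.
    destruct (Rmult_integral _ _ Hf); lra.
  - intros H4. apply (fstar_root_eq0 a b Hb H1 H9 t); lra.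
Qed.

Theorem mainTheorem11 (a b theta : R) :
  standing a b -> PI / 2 < theta < PI ->
  (w a b theta = 0 <-> (a > 1 / 4 /\ theta = acos (- (1 / (2 * sqrt a))))).
Proof.
  intros Hs Ht.
  pose proof (cos_in_second_quadrant theta Ht) as Hc.
  rewrite (w_eq0_iff a b theta Hs Ht), (four_mul_sqr_eq1_iff a _ Hc).
  split; intros [Ha E]; split; try exact Ha;
    pose proof (inv_two_sqrt_bounds a Ha);
    pose proof PI_RGT_0;
    apply (eq_acos_iff theta); lra.
Qed.
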